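(* Let $X$ be an SL-space with spatial part $Y$. Then $X$ is an algebraic L-space if and only if $Y$ is a compactly based sober space.
   Context: A Priestley space is a Stone space $X$ with a partial order such that clopen upsets separate points. An L-space is a Priestley space in which the downset of each clopen set is clopen and the closure of each open upset is open. ${\sf ClopUp}(X)$ is the set of clopen upsets. The spatial part of $X$ is $Y=\{y\in X\mid{\downarrow}y\text{ is clopen}\}$, topologized by declaring $V\subseteq Y$ open iff $V=U\cap Y$ for some $U\in{\sf ClopUp}(X)$. $X$ is an SL-space if $Y$ is dense in $X$. A Scott upset is a closed upset $F$ with $\min F\subseteq Y$; ${\sf ClopSUp}(X)$ is the set of clopen Scott upsets; $\mathrm{core}\,U=\bigcup\{V\in{\sf ClopSUp}(X)\mid V\subseteq U\}$. $X$ is an algebraic L-space if $\mathrm{core}\,U$ is dense in $U$ for each $U\in{\sf ClopUp}(X)$. A topological space is compactly based if it has a basis of compact open sets; it is sober if every irreducible closed set is the closure of a unique point. *)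

From HB Require Import structures.
From mathcomp Require Import all_boot all_order.
From mathcomp Require Import all_classical topology.
Set Implicit Arguments. Unset Strict Implicit. Unset Printing Implicit Defensive.
Local Open Scope classical_set_scope.

Section Ordered.
Variables (X : topologicalType) (le : X -> X -> Prop).

Definition partial_order :=
  [/\ (forall x, le x x),
      (forall x y, le x y -> le y x -> x = y) &
      (forall x y z, le x y -> le y z -> le x z)].

Definition upset (A : set X) := forall x y, A x -> le x y -> A y.
Definition down (A : set X) : set X := [set x | exists2 y, A y & le x y].

Definition stone_space :=
  [/\ compact [set: X], hausdorff_space X & zero_dimensional X].

Definition ClopUp (U : set X) := clopen U /\ upset U.

Definition priestley_space :=
  [/\ stone_space, partial_order &
      forall x y, ~ le x y -> exists U, [/\ ClopUp U, U x & ~ U y]].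

Definition L_space :=
  [/\ priestley_space,
      (forall A, clopen A -> clopen (down A)) &
      (forall U, open U -> upset U -> open (closure U))].

Definition spatial_part : set X := [set y | clopen (down [set y])].

(** Opens of the topology on Y (as subsets of X contained in Y) *)
Definition Y_open (V : set X) :=
  exists2 U, ClopUp U & V = U `&` spatial_part.

Definition SL_space := L_space /\ dense spatial_part.

Definition minimal (F : set X) : set X :=
  [set x | F x /\ forall z, F z -> le z x -> z = x].

Definition scott_upset (F : set X) :=
  [/\ closed F, upset F & minimal F `<=` spatial_part].
Definition ClopSUp (V : set X) :=
  [/\ clopen V, upset V & minimal V `<=` spatial_part].

Definition core (U : set X) : set X :=
  \bigcup_(V in [set V | ClopSUp V /\ V `<=` U]) V.

Definition algebraic_L_space :=
  L_space /\ forall U, ClopUp U -> U `<=` closure (core U).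

End Ordered.

(** Topological notions for a space given by a carrier S : set T and a
    family O of open subsets of S. *)
Section RelTop.
Variables (T : Type) (S : set T) (O : set (set T)).

Definition rclosed (C : set T) := C `<=` S /\ O (S `\` C).

Definition rcompact (K : set T) :=
  K `<=` S /\
  forall (I : Type) (F : I -> set T), (forall i, O (F i)) ->
    K `<=` \bigcup_(i in [set: I]) F i ->
    exists2 D : set I, finite_set D & K `<=` \bigcup_(i in D) F i.

Definition compactly_based :=
  forall V x, O V -> V x -> exists W, [/\ O W, rcompact W, W x & W `<=` V].

Definition rclosure (A : set T) : set T :=
  [set z | S z /\ forall C, rclosed C -> A `<=` C -> C z].

Definition irreducible_closed (C : set T) :=
  [/\ rclosed C, C !=set0 &
      forall C1 C2, rclosed C1 -> rclosed C2 -> C = C1 `|` C2 ->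
        C = C1 \/ C = C2].

Definition sober :=
  forall C, irreducible_closed C ->
    exists y, [/\ S y, C = rclosure [set y] &
                  forall y', S y' -> C = rclosure [set y'] -> y' = y].

End RelTop.

(* Minimal points exist below every point of a closed set (Zorn's lemma,
   chains being bounded below by compactness), so a clopen upset U meets the
   spatial part Y in a compact set exactly when all minimal points of U are
   spatial: a cover of U `&` Y by traces of clopen upsets then covers U, while
   a non-spatial minimal point m of U would, by density of Y, lie in a finite
   union of clopen upsets avoiding m.  Hence the compact opens of Y are the
   traces of clopen Scott upsets, and they form a basis iff core U is dense in
   every clopen upset U.  Sobriety holds regardless: for an irreducible closed
   Y `\` U, the clopen upsets not contained in U form a directed family, so by
   compactness some x outside U lies in all of them; then down x is the
   complement of U, and Y `\` U is the closure of x. *)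

From Pilot Require Import Defs.
From mathcomp Require Import all_boot all_order.
From mathcomp Require Import all_classical topology.
Import Defs. (* so that [down] is Defs.down, not classical_sets.down *)
Set Implicit Arguments. Unset Strict Implicit. Unset Printing Implicit Defensive.
Local Open Scope classical_set_scope.

Lemma dense_subset_closed (X : topologicalType) (Y U C : set X) :
  dense Y -> open U -> closed C -> U `&` Y `<=` C -> U `<=` C.
Proof.
move=> dY oU cC UYC x Ux; apply: contrapT => nCx.
have [y [[Uy nCy] Yy]] :=
  dY _ (ex_intro _ x (conj Ux nCx)) (openI oU (closed_openC cC)).
exact/nCy/UYC.
Qed.

Lemma compact_directed_bigcap (X : topologicalType) (K : set X)
    (F : set (set X)) :
  compact K -> (forall A, F A -> closed A) -> F !=set0 ->
  (forall A B, F A -> F B -> exists2 C, F C & C `<=` A `&` B) ->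
  (forall A, F A -> A `&` K !=set0) -> \bigcap_(A in F) A `&` K !=set0.
Proof.
move=> cK cF [A0 FA0] dirF FK.
pose G := filter_from F (fun A => A `&` K).
have PG : ProperFilter G.
  apply: filter_from_proper FK; apply: filter_from_filter; first by exists A0.
  move=> A B FA FB; have [C FC CAB] := dirF _ _ FA FB.
  by exists C => // x [/CAB[Ax Bx] Kx].
have [|x [Kx Gx]] := cK G PG; first by exists A0 => // x [].
exists x; split=> // A FA; apply: (cF _ FA) => B Bx.
have GAK : G (A `&` K) by exists A.
by have [y [[Ay _] By]] := Gx _ _ GAK Bx; exists y.
Qed.

Lemma compact_finite_subcover (X : topologicalType) (K : set X) (I : Type)
    (f : I -> set X) :
  compact K -> (forall i, open (f i)) -> K `<=` \bigcup_(i in [set: I]) f i ->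
  exists2 D : set I, finite_set D & K `<=` \bigcup_(i in D) f i.
Proof.
move=> cK of_ Kf; apply: contrapT => nD.
pose F := [set ~` \bigcup_(i in D) f i | D in [set D : set I | finite_set D]].
have [x [Fx Kx]] : \bigcap_(A in F) A `&` K !=set0.
  apply: (compact_directed_bigcap cK).
  - by move=> _ [D _ <-]; rewrite closedC; apply: bigcup_open => i _; exact: of_.
  - by exists (~` \bigcup_(i in set0) f i), set0 => //; exact: finite_set0.
  - move=> _ _ [D1 fD1 <-] [D2 fD2 <-].
    exists (~` \bigcup_(i in D1 `|` D2) f i).
      by exists (D1 `|` D2) => //; rewrite /= finite_setU.
    by rewrite bigcup_setU setCU.
  - move=> _ [D fD <-]; apply: contrapT => nDK; apply: nD; exists D => // x Kx.
    by apply: contrapT => nx; apply: nDK; exists x.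
have [i _ fxi] := Kf x Kx.
have : F (~` \bigcup_(j in [set i]) f j).
  by exists [set i] => //; exact: finite_set1.
by move=> /Fx; rewrite bigcup_set1; apply.
Qed.

Section Priestley.
Variables (X : topologicalType) (le : X -> X -> Prop).
Hypothesis le_po : partial_order le.
Hypothesis clopup_sep :
  forall x y, ~ le x y -> exists U, [/\ ClopUp le U, U x & ~ U y].
Hypothesis X_compact : compact [set: X].

Local Notation Y := (spatial_part le).

Hypothesis Y_dense : dense Y.

Let le_refl x : le x x. Proof. by case: le_po. Qed.
Let le_anti x y : le x y -> le y x -> x = y.
Proof. by case: le_po => _ + _; apply. Qed.
Let le_trans x y z : le x y -> le y z -> le x z.
Proof. by case: le_po => _ _; apply. Qed.

Lemma ClopUpI A B : ClopUp le A -> ClopUp le B -> ClopUp le (A `&` B).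
Proof.
move=> [cA upA] [cB upB]; split; first exact: clopenI.
by move=> a b [Aa Ba] ab; split; [exact: upA Aa ab|exact: upB Ba ab].
Qed.

Lemma ClopUpU A B : ClopUp le A -> ClopUp le B -> ClopUp le (A `|` B).
Proof.
move=> [cA upA] [cB upB]; split; first exact: clopenU.
by move=> a b [Aa|Ba] ab; [left; exact: upA Aa ab|right; exact: upB Ba ab].
Qed.

Lemma upset_setC_down A : upset le (~` down le A).
Proof.
by move=> a b nda ab [c Ac bc]; apply: nda; exists c => //; exact: le_trans ab bc.
Qed.

Lemma down1S x y : le x y -> down le [set x] `<=` down le [set y].
Proof. by move=> xy z [_ -> zx]; exists y => //; exact: le_trans zx xy. Qed.

Lemma closed_down1 x : closed (down le [set x]).
Proof.
move=> z clz; apply: contrapT => nz.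
have [|U [[[oU _] upU] Uz nUx]] := clopup_sep (x := z) (y := x).
  by move=> zx; apply: nz; exists x.
have [a [[_ -> ax] Ua]] := clz U (open_nbhs_nbhs (conj oU Uz)).
exact/nUx/(upU _ _ Ua ax).
Qed.

Lemma spatial_closure_upset A y : upset le A -> Y y -> closure A y -> A y.
Proof.
move=> upA [oD _] clAy.
have Dy : down le [set y] y by exists y.
have [a [Aa [_ -> ay]]] := clAy _ (open_nbhs_nbhs (conj oD Dy)).
exact: upA ay.
Qed.

Lemma closed_chain_lower_bound F Z : closed F -> Z !=set0 -> Z `<=` F ->
  total_on Z le -> exists2 p, F p & forall z, Z z -> le p z.
Proof.
move=> cF [z0 Zz0] ZF Ztot.
pose G := [set F `&` down le [set z] | z in Z].
have [p [Fp _]] : \bigcap_(A in G) A `&` [set: X] !=set0.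
  apply: (compact_directed_bigcap X_compact).
  - by move=> _ [z _ <-]; apply: closedI cF _; exact: closed_down1.
  - by exists (F `&` down le [set z0]), z0.
  - move=> _ _ [z1 Z1 <-] [z2 Z2 <-].
    have [z12|z21] := Ztot _ _ Z1 Z2.
      exists (F `&` down le [set z1]); first by exists z1.
      by rewrite subsetI; split=> //; apply: setIS; exact: down1S.
    exists (F `&` down le [set z2]); first by exists z2.
    by rewrite subsetI; split=> //; apply: setIS; exact: down1S.
  - by move=> _ [z Zz <-]; exists z; split=> //; split; [exact: ZF|exists z].
exists p; first by have [] := Fp _ (imageP _ Zz0).
by move=> z Zz; have [_ [_ -> pz]] := Fp _ (imageP _ Zz).
Qed.

Lemma minimal_below F x : closed F -> F x -> exists m, minimal le F m /\ le m x.
Proof.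
move=> cF Fx.
pose T := {z | F z /\ le z x}.
pose R (a b : T) := `[< le (sval b) (sval a) >].
have [||||[m [Fm mx]] mmax] := @Zorn T R.
- by move=> a; apply/asboolP.
- by move=> a b c /asboolP ba /asboolP cb; apply/asboolP; exact: le_trans cb ba.
- by move=> [a ?] [b ?] /asboolP ba /asboolP ab; apply: eq_exist; exact: le_anti.
- move=> A Atot.
  pose Z := x |` [set sval c | c in A].
  have ZFx z : Z z -> F z /\ le z x by case=> [->|[c _ <-]]; [|exact: (svalP c)].
  have Zx z : Z z -> le z x by move=> /ZFx[].
  have [p Fp pZ] : exists2 p, F p & forall z, Z z -> le p z.
    apply: closed_chain_lower_bound cF _ _ _; first by exists x; left.
      by move=> z /ZFx[].
    move=> z1 z2 [->|[c Ac <-]] Z2; first by right; exact: Zx.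
    case: Z2 => [->|[d Ad <-]].
      by left; exact: Zx (or_intror (imageP _ Ac)).
    by have [/asboolP|/asboolP] := Atot _ _ Ac Ad; [right|left].
  exists (exist _ p (conj Fp (pZ _ (or_introl erefl)))) => c Ac; apply/asboolP.
  exact: pZ (or_intror (imageP _ Ac)).
- exists m; split=> //; split=> // z Fz zm.
  have zx := le_trans zm mx.
  by have := mmax (exist _ z (conj Fz zx)) (asboolT zm); case.
Qed.

Lemma rclosed_setD_ClopUp U : ClopUp le U -> rclosed Y (Y_open le) (Y `\` U).
Proof. by move=> cU; split=> [? []//|]; exists U; rewrite // setDD setIC. Qed.

Lemma rclosedP C :
  rclosed Y (Y_open le) C -> exists2 U, ClopUp le U & C = Y `\` U.
Proof.
move=> [CY [U cU eU]]; exists U => //.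
by rewrite -(setIidr CY) -setDD eU setDIr setDv setU0.
Qed.

Lemma rclosure_spatial1 y : Y y ->
  rclosure Y (Y_open le) [set y] = Y `&` down le [set y].
Proof.
move=> Yy; apply/seteqP; split=> z.
  move=> [Yz clz]; have : (Y `\` ~` down le [set y]) z.
    apply: clz => [|_ ->]; last by split=> // nd; apply: nd; exists y.
    apply: rclosed_setD_ClopUp; split; last exact: upset_setC_down.
    exact: (@clopenC _ _ set0 Yy).
  by rewrite setDE setCK.
move=> [Yz [_ -> zy]]; split=> // C /rclosedP[U [_ upU] ->] /(_ y erefl)[_ nUy].
by split=> // Uz; exact/nUy/(upU _ _ Uz zy).
Qed.

Lemma rcompact_ClopSUp U : ClopSUp le U -> rcompact Y (Y_open le) (U `&` Y).
Proof.
move=> [[oU cU] upU minUY]; split=> [? []//|I G OG cov].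
have /choice[g gP] i : exists W, ClopUp le W /\ G i = W `&` Y.
  by have [W ? ?] := OG i; exists W.
have Ucov : U `<=` \bigcup_(i in [set: I]) g i.
  move=> x Ux; have [m [[Um mmin] mx]] := minimal_below cU Ux.
  have [i _] := cov m (conj Um (minUY m (conj Um mmin))).
  by rewrite (gP i).2 => -[gim _]; exists i => //; exact: (gP i).1.2 _ _ gim mx.
have [D fD UD] := compact_finite_subcover
  (subclosed_compact cU X_compact (@subsetT _ U)) (fun i => (gP i).1.1.1) Ucov.
exists D => // y [Uy Yy]; have [i Di giy] := UD y Uy.
by exists i => //; rewrite (gP i).2.
Qed.

Lemma ClopSUp_of_rcompact U : ClopUp le U ->
  rcompact Y (Y_open le) (U `&` Y) -> ClopSUp le U.
Proof.
move=> [[oU cU] upU] [_ UYcpt]; split=> // m [Um mmin].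
apply: contrapT => nYm.
pose I := {W | ClopUp le W /\ ~ W m}.
have [|y [Uy Yy]|D fD UD] := UYcpt I (fun i => sval i `&` Y).
- by move=> i; exists (sval i); first exact: (svalP i).1.
- have [|W [cW Wy nWm]] := clopup_sep (x := y) (y := m).
    by move=> ym; apply: nYm; rewrite -(mmin y Uy ym).
  by exists (exist _ W (conj cW nWm)).
have cV : closed (\bigcup_(i in D) sval i).
  by apply: (@closed_bigcup _ {classic I}) fD _ => i _; exact: (svalP i).1.1.2.
have UYV : U `&` Y `<=` \bigcup_(i in D) sval i.
  by move=> y /UD[i Di [? _]]; exists i.
have [i _ im] := dense_subset_closed Y_dense oU cV UYV Um.
exact: (svalP i).2 im.
Qed.

Lemma irreducible_setD_prime U : ClopUp le U ->
  irreducible_closed Y (Y_open le) (Y `\` U) ->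
  forall W1 W2, ClopUp le W1 -> ClopUp le W2 ->
    W1 `&` W2 `<=` U -> W1 `<=` U \/ W2 `<=` U.
Proof.
move=> cU [_ _ irr] W1 W2 cW1 cW2 W12U.
have YU_split : Y `\` U = (Y `\` (W1 `|` U)) `|` (Y `\` (W2 `|` U)).
  apply/seteqP; split=> z; last first.
    by case=> -[Yz nWUz]; split=> // Uz; apply: nWUz; right.
  move=> [Yz nUz].
  have [W1z|nW1z] := pselect (W1 z); last by left; split=> // -[].
  by right; split=> // -[W2z|//]; exact/nUz/W12U.
have WU W : ClopUp le W -> Y `\` U = Y `\` (W `|` U) -> W `<=` U.
  move=> [[oW _] _] eW; apply: (dense_subset_closed Y_dense oW cU.1.2).
  move=> z [Wz Yz]; apply: contrapT => nUz.
  by have : (Y `\` U) z by []; rewrite eW => -[_]; apply; left.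
have rcl W : ClopUp le W -> rclosed Y (Y_open le) (Y `\` (W `|` U)).
  by move=> cW; apply: rclosed_setD_ClopUp; exact: ClopUpU.
by case: (irr _ _ (rcl _ cW1) (rcl _ cW2) YU_split) => eW;
  [left; exact: WU cW1 eW|right; exact: WU cW2 eW].
Qed.

Lemma prime_ClopUp_down1 U : ClopUp le U -> ~` U !=set0 ->
  (forall W1 W2, ClopUp le W1 -> ClopUp le W2 ->
    W1 `&` W2 `<=` U -> W1 `<=` U \/ W2 `<=` U) ->
  exists x, down le [set x] = ~` U.
Proof.
move=> [[oU _] upU] [c nUc] prime.
pose F := [set W | ClopUp le W /\ ~ W `<=` U].
have [x [Fx nUx]] : \bigcap_(W in F) W `&` ~` U !=set0.
  apply: (compact_directed_bigcap (subclosed_compact _ X_compact (@subsetT _ _))).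
  - by rewrite closedC.
  - by move=> W [[[_ cW] _] _].
  - by exists setT; split=> [|TU]; [split; [exact: clopenT|by []]|exact/nUc/TU].
  - move=> A B [cA nAU] [cB nBU]; exists (A `&` B) => //.
    by split=> [|/(prime _ _ cA cB)[]]; first exact: ClopUpI.
  - move=> W [_ nWU]; apply: contrapT => nWnU; apply: nWU => w Ww.
    by apply: contrapT => nUw; apply: nWnU; exists w.
exists x; apply/seteqP; split=> [z [_ -> zx] Uz|z nUz].
  exact/nUx/(upU _ _ Uz zx).
exists x => //; apply: contrapT => nzx.
have [W [cW Wz nWx]] := clopup_sep nzx.
have FW : F W by split=> // WU; exact/nUz/WU.
exact/nWx/(Fx _ FW).
Qed.

Lemma sober_spatial_part : sober Y (Y_open le).
Proof.
move=> C irrC; have [/rclosedP[U cU eC] [c Cc] _] := irrC; subst C.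
have [x dx] : exists x, down le [set x] = ~` U.
  apply: prime_ClopUp_down1 => //; first by exists c; case: Cc.
  exact: irreducible_setD_prime.
have Yx : Y x by rewrite /spatial_part /= dx; exact: (@clopenC _ _ set0 cU.1).
have YU_x : Y `\` U = Y `&` down le [set x] by rewrite dx setDE.
exists x; split=> [//||y Yy]; first by rewrite rclosure_spatial1 // YU_x.
rewrite rclosure_spatial1 // YU_x => exy.
have [_ [_ -> xy]] : (Y `&` down le [set y]) x.
  by rewrite -exy; split=> //; exists x.
have [_ [_ -> yx]] : (Y `&` down le [set x]) y.
  by rewrite exy; split=> //; exists y.
exact: le_anti.
Qed.

Lemma compactly_based_of_core_dense :
  (forall U, ClopUp le U -> U `<=` closure (core le U)) ->
  compactly_based Y (Y_open le).
Proof.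
move=> core_dense _ x [U cU ->] [Ux Yx].
have upcore : upset le (core le U).
  by move=> a b [V [[clV upV minV] VU] Va] ab; exists V => //; exact: upV Va ab.
have [V [SV VU] Vx] := spatial_closure_upset upcore Yx (core_dense U cU x Ux).
have [clV upV _] := SV.
exists (V `&` Y); split=> //; first by exists V.
- exact: rcompact_ClopSUp.
- by move=> z [Vz Yz]; split=> //; exact: VU.
Qed.

Lemma core_dense_of_compactly_based : compactly_based Y (Y_open le) ->
  forall U, ClopUp le U -> U `<=` closure (core le U).
Proof.
move=> cb U cU; have [[oU cU'] _] := cU.
apply: (dense_subset_closed Y_dense oU (@closed_closure _ _)) => y UYy.
have [_ [[V cV ->] Vcpt [Vy _] VYU]] := cb _ y (ex_intro2 _ _ U cU erefl) UYy.
have VU : V `<=` U.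
  by apply: (dense_subset_closed Y_dense cV.1.1 cU') => z /VYU[].
apply: subset_closure; exists V => //; split=> //.
exact: ClopSUp_of_rcompact.
Qed.
End Priestley.

Theorem theorem4p11 (X : topologicalType) (le : X -> X -> Prop) :
  SL_space le ->
  (algebraic_L_space le <->
   (compactly_based (spatial_part le) (Y_open le) /\
    sober (spatial_part le) (Y_open le))).
Proof.
move=> [LX dY]; have [[[cX _ _] po sep] _ _] := LX.
split=> [[_ core_dense]|[cb _]].
  split; first exact: compactly_based_of_core_dense.
  exact: sober_spatial_part.
by split=> //; exact: core_dense_of_compactly_based.
Qed.
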